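(* There is an absolute constant $C>0$ such that for every prime $p$ and integer $n\ge1$, with $G=\mathbb{Z}_p^n$: (i) there is a deterministic query algorithm which, for every $f$ hiding a subgroup $H\le G$, decides whether $H$ is trivial using at most $C\sqrt{p^{\,n-k}}$ queries; (ii) there is a deterministic query algorithm which, for every $f$ hiding a subgroup $H\le G$, outputs $H$ using at most $C\max\{k,\sqrt{\max\{1,k\}\cdot p^{\,n-k}}\}$ queries; here $k=\log_p|H|$, which is not known to the algorithms in advance.
   Context: Hidden subgroup problem ($\mathsf{HSP}$): $G$ is a finite group known to the algorithm, $X$ a finite set, and $f:G\to X$ is an unknown function with the promise that there is a subgroup $H\le G$ such that for all $g_1,g_2\in G$, $f(g_1)=f(g_2)$ iff $g_1H=g_2H$; we say $f$ hides $H$. The identification version asks to output $H$; the decision version asks whether $H$ is trivial. A deterministic query algorithm accesses $f$ only by adaptively choosing $g\in G$ and receiving $f(g)$ (a query). $\mathbb{Z}_p^n$ is the $n$-fold direct product of the additive group of integers mod $p$. *)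

From Stdlib Require Import Reals.
From mathcomp Require Import all_boot all_algebra.
Set Implicit Arguments. Unset Strict Implicit. Unset Printing Implicit Defensive.
Import GRing.Theory.
Local Open Scope ring_scope.

Definition Zpn (p n : nat) := 'rV['F_p]_n.

Definition is_subgroup (G : finZmodType) (H : {set G}) : Prop :=
  0 \in H /\ (forall x y, x \in H -> y \in H -> x - y \in H).

Definition coset (G : finZmodType) (H : {set G}) (g : G) : {set G} :=
  [set g + h | h in H].

Definition hides (G : finZmodType) (X : Type) (f : G -> X) (H : {set G}) : Prop :=
  forall g1 g2, f g1 = f g2 <-> coset H g1 = coset H g2.

(* Since the oracle's codomain X
   is an arbitrary (unknown) finite set, the information an answer carries is
   its equality pattern with the previous answers: the continuation receives
   the list [a_1 == a; ...; a_m == a] comparing the new answer a with all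
   previous answers a_1..a_m (in query order). *)
Inductive qtree (G Out : Type) : Type :=
| Leaf : Out -> qtree G Out
| Query : G -> (seq bool -> qtree G Out) -> qtree G Out.

Arguments Leaf {G Out}.
Arguments Query {G Out}.

Fixpoint run_from (G Out : Type) (X : eqType) (f : G -> X) (hist : seq X)
    (t : qtree G Out) {struct t} : Out * nat :=
  match t with
  | Leaf o => (o, 0%N)
  | Query g k =>
      let a := f g in
      let r := run_from f (rcons hist a) (k [seq b == a | b <- hist]) in
      (r.1, r.2.+1)
  end.

Definition run (G Out : Type) (X : eqType) (t : qtree G Out) (f : G -> X) :=
  run_from f [::] t.
Definition output (G Out : Type) (X : eqType) (t : qtree G Out) (f : G -> X) :=
  (run t f).1.
Definition nqueries (G Out : Type) (X : eqType) (t : qtree G Out) (f : G -> X) :=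
  (run t f).2.

From Stdlib Require Import Reals FunctionalExtensionality Lia.
From mathcomp Require Import all_boot all_algebra zify.
Set Implicit Arguments. Unset Strict Implicit. Unset Printing Implicit Defensive.
Import GRing.Theory.

(* Gaussian elimination on H <= F_p^n, one coordinate at a time.  Let N be the
   non-pivot coordinates met so far, so that H meets the vectors V_N supported on
   N trivially and |V_N| <= p^(n-k).  Coordinate d is a pivot iff e_d + a + b lies
   in H for some a in A, b in B, where V_N = A + B is a baby-step giant-step
   decomposition with |B| <= 2s and |A| = O(|V_N| / s); this shows up as a
   collision f(e_d + a) = f(-b).  The baby steps can be shared by all coordinates,
   so a sweep with parameter s costs O(s + n + (k + 1) p^(n-k) / s) queries, and
   doubling s until a sweep completes within its budget gives the bound for (ii),
   since (n - k)^2 = O(p^(n-k)).  To decide whether H is trivial it suffices to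
   stop at the first pivot; before it, |V_N| grows geometrically, so the cost is
   O(s + (n - k) + p^(n-k) / s) and s = O(sqrt(p^(n-k))) suffices. *)

Section QueryPrograms.
Variable G : finZmodType.

(* A program looks at a list of points at a time and learns which pairs of them
   lie in the same coset; [compile] turns it into a decision tree that queries
   every point once, so its cost is the number of distinct points looked at. *)
Inductive prog (A : Type) : Type :=
| Ret : A -> prog A
| Look : seq G -> ((G -> G -> bool) -> prog A) -> prog A.
Arguments Ret {A}.
Arguments Look {A}.

Definition coset_rel (H : {set G}) (L : seq G) (x y : G) : bool :=
  [&& x \in L, y \in L & (x - y)%R \in H].

Fixpoint eval A (H : {set G}) (P : prog A) : A :=
  match P with Ret a => a | Look L k => eval H (k (coset_rel H L)) end.

Fixpoint probes A (H : {set G}) (P : prog A) : seq G :=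
  match P with Ret _ => [::] | Look L k => L ++ probes H (k (coset_rel H L)) end.

Fixpoint bind A B (P : prog A) (g : A -> prog B) : prog B :=
  match P with Ret a => g a | Look L k => Look L (fun r => bind (k r) g) end.

Lemma eval_bind A B H (P : prog A) (g : A -> prog B) :
  eval H (bind P g) = eval H (g (eval H P)).
Proof. by elim: P => //= L k IH; rewrite IH. Qed.

Lemma probes_bind A B H (P : prog A) (g : A -> prog B) :
  probes H (bind P g) = probes H P ++ probes H (g (eval H P)).
Proof. by elim: P => //= L k IH; rewrite IH catA. Qed.

(* [qs] lists the points queried so far; [ids] names the coset of each of them by
   the position of the first answer equal to its own, which the answer pattern
   [find id pat] reveals. *)
Fixpoint query_fresh Out (L qs : seq G) (ids : seq nat)
   (k : seq G -> seq nat -> qtree G Out) : qtree G Out :=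
  match L with
  | [::] => k qs ids
  | x :: L' =>
      if x \in qs then query_fresh L' qs ids k
      else Query x (fun pat => query_fresh L' (rcons qs x) (rcons ids (find id pat)) k)
  end.

Definition class_rel (L qs : seq G) (ids : seq nat) (x y : G) : bool :=
  [&& x \in L, y \in L & nth 0%N ids (index x qs) == nth 0%N ids (index y qs)].

Fixpoint compile A (P : prog A) (qs : seq G) (ids : seq nat) : qtree G A :=
  match P with
  | Ret a => Leaf a
  | Look L k =>
      query_fresh L qs ids (fun qs' ids' => compile (k (class_rel L qs' ids')) qs' ids')
  end.

Definition add_fresh (L qs : seq G) :=
  foldl (fun qs x => if x \in qs then qs else rcons qs x) qs L.

Lemma add_fresh_uniq L qs : uniq qs -> uniq (add_fresh L qs).
Proof.
elim: L qs => //= x L IH qs uq; apply: IH; case: ifP => // /negbT xn.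
by rewrite rcons_uniq xn.
Qed.

Lemma mem_add_fresh L qs y : y \in add_fresh L qs = (y \in qs) || (y \in L).
Proof.
elim: L qs => [|x L IH] qs /=; first by rewrite orbF.
rewrite IH in_cons; case: ifP => xq.
  by case: (eqVneq y x) => [->|]; rewrite ?xq ?orbT.
by rewrite mem_rcons in_cons; case: (y == x); rewrite ?orbT.
Qed.

Lemma size_add_fresh L qs : (size qs <= size (add_fresh L qs))%N.
Proof.
elim: L qs => //= x L IH qs; case: ifP => _ //.
by apply: leq_trans (IH _); rewrite size_rcons.
Qed.

Section Run.
Variables (X : eqType) (f : G -> X).

Definition class_ids (qs : seq G) := [seq index (f q) (map f qs) | q <- qs].

Lemma class_ids_rcons qs x :
  class_ids (rcons qs x) = rcons (class_ids qs) (index (f x) (map f qs)).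
Proof.
rewrite /class_ids !map_rcons; congr rcons.
  by apply/eq_in_map => q qin; rewrite -cats1 index_cat map_f.
rewrite -cats1 index_cat; case: ifP => // /negbT nin.
by rewrite /= eqxx addn0 memNindex.
Qed.

Lemma run_query_fresh Out (L qs : seq G) (k : seq G -> seq nat -> qtree G Out) :
  let qs' := add_fresh L qs in
  run_from f (map f qs) (query_fresh L qs (class_ids qs) k) =
  ((run_from f (map f qs') (k qs' (class_ids qs'))).1,
   ((run_from f (map f qs') (k qs' (class_ids qs'))).2 + (size qs' - size qs))%N).
Proof.
elim: L qs => [|x L IH] qs /=; first by rewrite subnn addn0; case: run_from.
case: ifP => xq; first exact: IH.
have find_answer hs : find id [seq b == f x | b <- hs] = index (f x) hs.
  by rewrite find_map /index; congr find.
rewrite [run_from _ _ (Query _ _)]/= find_answer -class_ids_rcons -map_rcons IH /=.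
have := size_add_fresh L (rcons qs x); rewrite size_rcons => hs.
by rewrite -addnS subnSK.
Qed.

Variable H : {set G}.
Hypothesis f_coset : forall x y, (f x == f y) = ((x - y)%R \in H).

Lemma class_relE L qs : {subset L <= qs} -> class_rel L qs (class_ids qs) = coset_rel H L.
Proof.
move=> sub; apply: functional_extensionality => x; apply: functional_extensionality => y.
rewrite /class_rel /coset_rel; case xL: (x \in L) => //; case yL: (y \in L) => //=.
have xq := sub _ xL; have yq := sub _ yL.
rewrite /class_ids (nth_map x) ?index_mem // (nth_map y) ?index_mem // !nth_index //.
rewrite -f_coset; apply/eqP/eqP => [e|->] //.
by apply: (index_inj (f x)) e; apply: map_f.
Qed.

Lemma run_compile A (P : prog A) qs : uniq qs ->
  let r := run_from f (map f qs) (compile P qs (class_ids qs)) in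
  r.1 = eval H P /\ (r.2 + size qs <= #|[set x in qs ++ probes H P]|)%N.
Proof.
elim: P qs => [a|L k IH] qs uq /=.
  by split=> //; rewrite cats0 cardsE add0n (card_uniqP uq).
rewrite run_query_fresh /=; set qs' := add_fresh L qs.
have subL : {subset L <= qs'} by move=> y yL; rewrite mem_add_fresh yL orbT.
rewrite class_relE //.
have [-> le_r] := IH (coset_rel H L) qs' (add_fresh_uniq L uq).
split=> //; have := size_add_fresh L qs; rewrite -/qs' => hs.
rewrite -addnA subnK //; apply: leq_trans le_r _.
apply: subset_leq_card; apply/subsetP => y; rewrite !inE !mem_cat mem_add_fresh.
by case/orP => [/orP[]|] ->; rewrite ?orbT.
Qed.

Lemma compile_correct A (P : prog A) :
  output (compile P [::] [::]) f = eval H P /\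
  (nqueries (compile P [::] [::]) f <= #|[set x in probes H P]|)%N.
Proof.
have [o1 o2] := run_compile P (qs := [::]) isT.
by rewrite /output /nqueries /run; split=> //; rewrite addn0 in o2.
Qed.
End Run.

End QueryPrograms.
Arguments Ret {G A}.
Arguments Look {G A}.

Section Subgroups.
Variables (G : finZmodType) (H : {set G}).
Hypothesis sgH : is_subgroup H.
Local Open Scope ring_scope.

Lemma subgroup0 : (0 : G) \in H. Proof. by case: sgH. Qed.

Lemma subgroupB x y : x \in H -> y \in H -> x - y \in H.
Proof. by case: sgH => _; apply. Qed.

Lemma subgroupN x : x \in H -> - x \in H.
Proof. by move=> hx; rewrite -sub0r subgroupB // subgroup0. Qed.

Lemma subgroupD x y : x \in H -> y \in H -> x + y \in H.
Proof. by move=> hx hy; rewrite -[y]opprK subgroupB // subgroupN. Qed.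

Lemma subgroupMn x m : x \in H -> x *+ m \in H.
Proof. by move=> hx; elim: m => [|m IH]; rewrite ?mulr0n ?subgroup0 // mulrS subgroupD. Qed.

Lemma eq_coset (x y : G) : (coset H x == coset H y) = (x - y \in H).
Proof.
apply/eqP/idP => [e|hxy].
  have : x \in coset H y.
    by rewrite -e; apply/imsetP; exists 0; rewrite ?addr0 // subgroup0.
  by case/imsetP => h hh ->; rewrite addrC addKr.
apply/setP => z; apply/imsetP/imsetP => [[h hh ->]|[h hh ->]].
  exists (x - y + h); first exact: subgroupD.
  by rewrite addrA addrCA subrr addr0.
exists (y - x + h); last by rewrite addrA addrCA subrr addr0.
by rewrite subgroupD // -opprB subgroupN.
Qed.

Lemma hides_eq (X : eqType) (f : G -> X) :
  hides f H -> forall x y, (f x == f y) = (x - y \in H).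
Proof. by move=> hf x y; rewrite -eq_coset; apply/eqP/eqP; case: (hf x y). Qed.

End Subgroups.

Section Sumsets.
Variable G : finZmodType.
Local Open Scope ring_scope.

Lemma add_eq_sub_eq (x x' y y' : G) : x + y = x' + y' -> x - x' = y' - y.
Proof. by move=> e; apply/eqP; rewrite subr_eq addrAC [y' + x']addrC -e addrK. Qed.

Lemma card_sumset (X Y : {set G}) :
  (forall x x' y y', x \in X -> x' \in X -> y \in Y -> y' \in Y -> x + y = x' + y' -> x = x') ->
  #|[set xy.1 + xy.2 | xy in setX X Y]| = (#|X| * #|Y|)%N.
Proof.
move=> uniq_sum; rewrite -cardsX card_in_imset // => [[x y] [x' y']].
move=> /setXP[hx hy] /setXP[hx' hy'] /= e.
by have e1 := uniq_sum _ _ _ _ hx hx' hy hy' e; rewrite e1 in e *; rewrite (addrI _ e).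
Qed.

End Sumsets.

Lemma card_bigcup_leq_sum (T : finType) m (F : nat -> {set T}) :
  (#|\bigcup_(i < m) F i| <= \sum_(i < m) #|F i|)%N.
Proof.
elim: m => [|m IH]; first by rewrite !big_ord0 cards0.
rewrite !big_ord_recr /=; apply: leq_trans (leq_card_setU _ _).1 _.
by rewrite leq_add2r.
Qed.

Lemma card_set_cat (T : finType) (s1 s2 : seq T) :
  (#|[set x in s1 ++ s2]| <= #|[set x in s1]| + #|[set x in s2]|)%N.
Proof.
apply: leq_trans (leq_card_setU _ _).1; apply: subset_leq_card.
by apply/subsetP => x; rewrite !inE mem_cat.
Qed.

Section Coordinates.
Variables p n : nat.
Hypothesis pp : prime p.
Local Notation G := (Zpn p n).
Local Open Scope ring_scope.

Lemma ltn_Fp (c : 'F_p) : (c < p)%N.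
Proof. by have := ltn_ord c; rewrite -[X in (_ < X)%N]card_ord card_Fp. Qed.

Lemma subgroupZ (H : {set G}) (c : 'F_p) u : is_subgroup H -> u \in H -> c *: u \in H.
Proof. by move=> sgH hu; rewrite -(natr_Zp c) scaler_nat subgroupMn. Qed.

Definition basisv (d : 'I_n) : G := \row_j (j == d)%:R.

Lemma basisvE d j : basisv d 0 j = (j == d)%:R.
Proof. by rewrite mxE. Qed.

Definition supported (N : seq 'I_n) : {set G} :=
  [set v : G | [forall j, (j \notin N) ==> (v 0 j == 0)]].

Definition vanishing (ds : seq 'I_n) : {set G} := supported (enum [predC ds]).

Lemma supportedP N (v : G) : reflect (forall j, j \notin N -> v 0 j = 0) (v \in supported N).
Proof.
rewrite inE; apply: (iffP forallP) => [h j jN|h j]; last by apply/implyP => /h ->.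
by apply/eqP; move/implyP: (h j); apply.
Qed.

Lemma vanishingP ds (v : G) : reflect (forall j, j \in ds -> v 0 j = 0) (v \in vanishing ds).
Proof.
apply: (iffP (supportedP _ _)) => h j jd; apply: h; move: jd.
  by rewrite mem_enum inE negbK.
by rewrite mem_enum inE negbK.
Qed.

Lemma supported0 N : 0 \in supported N.
Proof. by apply/supportedP => j _; rewrite mxE. Qed.

Lemma supportedD N (x y : G) : x \in supported N -> y \in supported N -> x + y \in supported N.
Proof.
by move=> /supportedP hx /supportedP hy; apply/supportedP => j jN; rewrite mxE hx ?hy ?addr0.
Qed.

Lemma supportedZ N c (x : G) : x \in supported N -> c *: x \in supported N.
Proof. by move=> /supportedP hx; apply/supportedP => j jN; rewrite mxE hx ?mulr0. Qed.

Lemma supportedB N (x y : G) : x \in supported N -> y \in supported N -> x - y \in supported N.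
Proof. by move=> hx hy; rewrite supportedD // -scaleN1r supportedZ. Qed.

Lemma supportedMn N (x : G) m : x \in supported N -> x *+ m \in supported N.
Proof. by move=> hx; rewrite -scaler_nat supportedZ. Qed.

Lemma supported_subset N N' : {subset N <= N'} -> supported N \subset supported N'.
Proof.
move=> sNN'; apply/subsetP => v /supportedP h; apply/supportedP => j jN'; apply: h.
by apply: contra jN'; apply: sNN'.
Qed.

Lemma basisv_supported N j : j \in N -> basisv j \in supported N.
Proof.
by move=> jN; apply/supportedP => i iN; rewrite basisvE; case: eqP => // e; rewrite e jN in iN.
Qed.

Lemma supported_cons_subset (j : 'I_n) N : supported N \subset supported (j :: N).
Proof. by apply: supported_subset => i iN; rewrite in_cons iN orbT. Qed.


Lemma supported_rcons_subset (d : 'I_n) N : supported N \subset supported (rcons N d).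
Proof. by apply: supported_subset => j jN; rewrite mem_rcons in_cons jN orbT. Qed.


Lemma vanishing_cons (d : 'I_n) ds (w : G) :
  (w \in vanishing (d :: ds)) = (w \in vanishing ds) && (w 0 d == 0).
Proof.
apply/idP/andP => [/vanishingP h|[/vanishingP h /eqP hd]].
  split; last by apply/eqP; apply: h; rewrite mem_head.
  by apply/vanishingP => j jd; apply: h; rewrite in_cons jd orbT.
by apply/vanishingP => j; rewrite in_cons => /orP[/eqP ->|]; [| apply: h].
Qed.


Lemma supported_vanishing (ds N : seq 'I_n) :
  (forall j, j \in N -> j \notin ds) -> supported N \subset vanishing ds.
Proof.
move=> dis; apply/subsetP => v /supportedP h; apply/vanishingP => j jd; apply: h.
by apply/negP => jN; move: (dis _ jN); rewrite jd.
Qed.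


Definition zero_coord (j : 'I_n) (v : G) : G := v - v 0 j *: basisv j.

Lemma zero_coord_at j (v : G) : zero_coord j v 0 j = 0.
Proof. by rewrite !mxE eqxx mulr1 subrr. Qed.

Lemma zero_coord_ne j (v : G) i : i != j -> zero_coord j v 0 i = v 0 i.
Proof. by move=> ne; rewrite !mxE (negbTE ne) mulr0 subr0. Qed.

Lemma zero_coordE j (v : G) : v = v 0 j *: basisv j + zero_coord j v.
Proof. by rewrite /zero_coord addrC subrK. Qed.

Lemma zero_coord_supported j N (v : G) :
  v \in supported (j :: N) -> zero_coord j v \in supported N.
Proof.
move=> /supportedP h; apply/supportedP => i iN.
case: (eqVneq i j) => [->|ne]; first exact: zero_coord_at.
by rewrite zero_coord_ne // h // in_cons negb_or ne.
Qed.

Lemma supported_cons j N (v : G) :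
  v \in supported (j :: N) = [exists c : 'F_p, exists w in supported N, v == c *: basisv j + w].
Proof.
apply/idP/existsP => [vjN|[c /exists_inP[w wN /eqP ->]]].
  by exists (v 0 j); apply/exists_inP; exists (zero_coord j v); rewrite -?zero_coordE ?zero_coord_supported.
rewrite supportedD ?supportedZ ?basisv_supported ?mem_head //.
by apply: (subsetP (supported_subset _)) wN => i; rewrite in_cons orbC => ->.
Qed.

Lemma card_supported N : uniq N -> #|supported N| = (p ^ size N)%N.
Proof.
elim: N => [_|j N IH /andP[jN uN]] /=.
  transitivity #|[set 0 : G]|; last by rewrite cards1.
  apply: eq_card => v; rewrite [RHS]inE.
  apply/supportedP/eqP => [h|-> j _]; last by rewrite mxE.
  by apply/rowP => i; rewrite h // mxE.
have -> : supported (j :: N) = [set x.1 *: basisv j + x.2 | x in setX [set: 'F_p] (supported N)].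
  apply/setP => v; rewrite supported_cons; apply/existsP/imsetP => [[c /exists_inP[w wN /eqP ->]]|].
    by exists (c, w) => //; apply/setXP; split => //; rewrite inE.
  by case=> [[c w]] /setXP[_ wN] ->; exists c; apply/exists_inP; exists w.
rewrite card_in_imset ?cardsX ?cardsT ?card_Fp ?IH ?expnS //.
move=> [c1 w1] [c2 w2] /setXP[_ /supportedP h1] /setXP[_ /supportedP h2] /= e.
have e1 := congr1 (fun v : G => v 0 j) e.
rewrite /= !mxE !eqxx !mulr1 h1 ?h2 // !addr0 in e1.
by rewrite e1 in e *; rewrite (addrI _ e).
Qed.

Lemma card_vanishing ds : uniq ds -> #|vanishing ds| = (p ^ (n - size ds))%N.
Proof.
move=> uds; rewrite card_supported ?enum_uniq // -cardE; congr (_ ^ _)%N.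
have := cardC [in ds]; rewrite card_ord -(card_uniqP uds).
by set a := #|_|; set b := #|_|; lia.
Qed.

Fixpoint span_set (Ps : seq G) : {set G} :=
  match Ps with
  | [::] => [set 0]
  | u :: Ps' => [set x.1 *: u + x.2 | x in setX [set: 'F_p] (span_set Ps')]
  end.

Lemma span_set_cons u Ps c x : x \in span_set Ps -> c *: u + x \in span_set (u :: Ps).
Proof. by move=> hx; apply/imsetP; exists (c, x) => //; apply/setXP; rewrite inE. Qed.

Lemma span_set_min (V : {set G}) Ps :
  0 \in V -> (forall c x y, x \in V -> y \in V -> c *: x + y \in V) ->
  {subset Ps <= V} -> span_set Ps \subset V.
Proof.
move=> V0 Vlin; elim: Ps => [|u Ps IH] /= sPV; apply/subsetP => x.
  by rewrite inE => /eqP ->.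
case/imsetP => [[c y]] /setXP [_ hy] ->; apply: Vlin; first by apply: sPV; rewrite mem_head.
by apply: (subsetP (IH _)) hy => w wP; apply: sPV; rewrite in_cons wP orbT.
Qed.

Lemma span_set_subgroup (H : {set G}) Ps :
  is_subgroup H -> {subset Ps <= H} -> span_set Ps \subset H.
Proof.
move=> sgH; apply: span_set_min; first exact: subgroup0.
by move=> c x y hx hy; rewrite subgroupD ?subgroupZ.
Qed.

Lemma span_set_supported N Ps : {subset Ps <= supported N} -> span_set Ps \subset supported N.
Proof.
apply: span_set_min; first exact: supported0.
by move=> c x y hx hy; rewrite supportedD ?supportedZ.
Qed.

End Coordinates.

Section Covers.
Variables p n : nat.
Hypothesis pp : prime p.
Local Notation G := (Zpn p n).
Local Notation supported := (supported p).
Local Notation basisv := (basisv p).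
Local Open Scope ring_scope.

(* A baby-step giant-step decomposition: baby steps [B], giant steps [A]. *)
Definition is_cover (N : seq 'I_n) s (A B : {set G}) : Prop :=
  [/\ A \subset supported N, B \subset supported N,
      (forall v, v \in supported N -> exists2 a, a \in A & exists2 b, b \in B & v = a + b),
      (#|B| <= 2 * s)%N & (s * #|A| <= 3 * maxn #|supported N| s)%N].

Lemma cover_all (N : seq 'I_n) s : (0 < s)%N -> (#|supported N| <= 2 * s)%N ->
  is_cover N s [set 0] (supported N).
Proof.
move=> s0 hV; split => //.
- by apply/subsetP => x; rewrite inE => /eqP ->; apply: supported0.
- by move=> v hv; exists 0; rewrite ?inE //; exists v; rewrite ?add0r.
- by rewrite cards1 muln1; lia.
Qed.

Lemma cover_cons_giant (j : 'I_n) N s A B : uniq N -> j \notin N -> (s <= p ^ size N)%N ->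
  is_cover N s A B ->
  is_cover (j :: N) s [set x.1 *: basisv j + x.2 | x in setX [set: 'F_p] A] B.
Proof.
move=> uN jN sP [sA sB cov hB hA]; have sNjN := supported_cons_subset p j N.
split.
- apply/subsetP => x /imsetP[[c a] /setXP[_ ha] ->].
  rewrite supportedD ?supportedZ ?basisv_supported ?mem_head //.
  exact: subsetP sNjN _ (subsetP sA _ ha).
- exact: subset_trans sB sNjN.
- move=> v hv; have [a ha [b hb e]] := cov _ (zero_coord_supported hv).
  exists (v 0 j *: basisv j + a); first by apply/imsetP; exists (v 0 j, a); rewrite ?inE.
  by exists b => //; rewrite -addrA -e -zero_coordE.
- exact: hB.
- apply: leq_trans (leq_mul (leqnn s) (leq_imset_card _ _)) _.
  rewrite cardsX cardsT card_Fp // mulnCA.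
  apply: leq_trans (leq_mul (leqnn p) hA) _.
  rewrite !card_supported //= ?jN // (maxn_idPl sP) expnS mulnCA leq_mul2l.
  by rewrite leq_maxl orbT.
Qed.

(* Split the [j]-th coordinate [c] as [r * (c %/ r) + c %% r] with
   [r = s %/ p ^ size N + 1]: the giant steps are the multiples of [r], the baby
   steps the small residues together with everything supported on [N]. *)
Lemma cover_cons_split (j : 'I_n) N s : uniq N -> j \notin N ->
  (p ^ size N < s < p ^ (size N).+1)%N -> exists A B, is_cover (j :: N) s A B.
Proof.
move=> uN jN /andP[Ps small]; set P := (p ^ size N)%N in Ps small.
have cV : #|supported (j :: N)| = (p * P)%N by rewrite card_supported /= ?jN ?uN // expnS.
have P0 : (0 < P)%N by rewrite expn_gt0 prime_gt0.
set r := (s %/ P).+1; set q := (p %/ r).+1.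
have rP : (s < r * P)%N by rewrite /r ltn_ceil.
exists [set basisv j *+ (r * val i) | i : 'I_q],
       [set basisv j *+ val x.1 + x.2 | x in setX [set: 'I_r] (supported N)]; split.
- apply/subsetP => x /imsetP[i _ ->].
  by rewrite supportedMn ?basisv_supported ?mem_head.
- apply/subsetP => x /imsetP[[i b] /setXP[_ hb] ->].
  rewrite supportedD ?supportedMn ?basisv_supported ?mem_head //.
  exact: subsetP (supported_cons_subset p j N) _ hb.
- move=> v hv; set c := v 0 j.
  have cr_q : (c %/ r < q)%N by rewrite /q ltnS leq_div2r // ltnW // ltn_Fp.
  have cr_r : (c %% r < r)%N by rewrite ltn_mod.
  exists (basisv j *+ (r * Ordinal cr_q)); first by apply/imsetP; exists (Ordinal cr_q).
  exists (basisv j *+ Ordinal cr_r + zero_coord j v).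
    apply/imsetP; exists (Ordinal cr_r, zero_coord j v) => //.
    by apply/setXP; rewrite inE zero_coord_supported.
  rewrite /= addrA -mulrnDr mulnC -divn_eq {1}(zero_coordE j v) -/c.
  by rewrite -{1}(natr_Zp c) scaler_nat.
- apply: leq_trans (leq_imset_card _ _) _.
  rewrite cardsX cardsT card_ord card_supported // -/P /r mulSn.
  by move: (leq_trunc_div s P); set t := (s %/ P * P)%N; lia.
- apply: leq_trans (leq_mul (leqnn s) (leq_imset_card _ _)) _.
  rewrite cardT size_enum_ord /q mulnS cV (maxn_idPl (ltnW _)); last by rewrite -expnS.
  have : (s * (p %/ r) <= p * P)%N.
    apply: leq_trans (leq_mul (ltnW rP) (leqnn _)) _.
    by rewrite mulnAC leq_mul // mulnC leq_trunc_div.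
  by rewrite expnS -/P in small; set a := (s * (p %/ r))%N; lia.
Qed.

Lemma cover_exists (N : seq 'I_n) s : uniq N -> (0 < s)%N -> exists A B, is_cover N s A B.
Proof.
move=> + s0; elim: N => [_|j N IH /andP[jN uN]].
  exists [set 0], (supported [::]); apply: cover_all; rewrite ?card_supported //=.
  by rewrite expn0; lia.
case: (leqP (p ^ (size N).+1) s) => [big|small].
  exists [set 0], (supported (j :: N)); apply: cover_all => //.
  by rewrite card_supported /= ?jN //; lia.
case: (leqP s (p ^ size N)) => [sP|Ps].
  have [A [B cAB]] := IH uN; eexists; exists B; exact: cover_cons_giant cAB.
by apply: cover_cons_split; rewrite ?Ps.
Qed.

Definition is_coverb (N : seq 'I_n) (s : nat) (AB : {set G} * {set G}) : bool :=
  [&& AB.1 \subset supported N, AB.2 \subset supported N,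
      [forall v in supported N, [exists a in AB.1, [exists b in AB.2, v == a + b]]],
      (#|AB.2| <= 2 * s)%N & (s * #|AB.1| <= 3 * maxn #|supported N| s)%N].

Definition pick_cover (N : seq 'I_n) s : {set G} * {set G} :=
  if [pick AB | is_coverb N s AB] is Some AB then AB else (set0, set0).

Lemma is_coverbP (N : seq 'I_n) s (A B : {set G}) :
  reflect (is_cover N s A B) (is_coverb N s (A, B)).
Proof.
rewrite /is_coverb /=; apply: (iffP idP).
  case/and5P => h1 h2 /forall_inP h3 h4 h5; split=> // v hv.
  have /exists_inP [a ha /exists_inP [b hb /eqP e]] := h3 v hv.
  by exists a => //; exists b.
case=> h1 h2 h3 h4 h5; rewrite h1 h2 h4 h5 /= andbT.
apply/forall_inP => v hv; have [a ha [b hb e]] := h3 v hv.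
by apply/exists_inP; exists a => //; apply/exists_inP; exists b => //; apply/eqP.
Qed.

Lemma coverP (N : seq 'I_n) s : uniq N -> (0 < s)%N ->
  is_cover N s (pick_cover N s).1 (pick_cover N s).2.
Proof.
move=> uN s0; rewrite /pick_cover; case: pickP => [[A B] /is_coverbP //|none].
have [A [B cAB]] := cover_exists uN s0.
by move: (none (A, B)); move/is_coverbP: cAB => ->.
Qed.

End Covers.

Lemma leq_pexpS p e : (1 < p)%N -> (2 * p ^ e <= p ^ e.+1)%N.
Proof. by move=> p1; rewrite expnS leq_mul2r p1 orbT. Qed.

Lemma sum_pexp_le p e : (1 < p)%N -> (\sum_(i < e.+1) p ^ i <= 2 * p ^ e)%N.
Proof.
move=> p1; elim: e => [|e IH]; first by rewrite big_ord1 expn0.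
rewrite big_ord_recr /=; have := leq_pexpS e p1.
by move: IH; set S := (\sum_(i < e.+1) p ^ i)%N; set Q := (p ^ e)%N; set Q1 := (p ^ e.+1)%N; lia.
Qed.

Section Sweep.
Variables p n : nat.
Hypothesis pp : prime p.
Local Notation G := (Zpn p n).
Local Notation supported := (supported p).
Local Notation vanishing := (vanishing p).
Local Notation basisv := (basisv p).
Local Notation pick_cover := (pick_cover p).
Local Open Scope ring_scope.

(* Only the first [up_log p s] coordinates of [N] enter the baby steps; since
   [N] only grows at its end, a sweep meets at most [up_log p s + 1] distinct
   baby-step sets, of total size [O(s)]. *)
Definition baby_len s := up_log p s.

Definition giant s (N : seq 'I_n) : {set G} :=
  [set x.1 + x.2 | x in setX (pick_cover (take (baby_len s) N) s).1
                                (supported (drop (baby_len s) N))].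

Definition baby s (N : seq 'I_n) : {set G} := (pick_cover (take (baby_len s) N) s).2.

Lemma giant_baby_cover s (N : seq 'I_n) : uniq N -> (0 < s)%N ->
  [/\ giant s N \subset supported N, baby s N \subset supported N &
      forall v, v \in supported N ->
        exists2 a, a \in giant s N & exists2 b, b \in baby s N & v = a + b].
Proof.
move=> uN s0; set t := baby_len s.
have [sA sB cov _ _] := coverP pp (take_uniq t uN) s0.
have sT : supported (take t N) \subset supported N by apply: supported_subset => j; apply: mem_take.
have sD : supported (drop t N) \subset supported N by apply: supported_subset => j; apply: mem_drop.
split.
- apply/subsetP => x /imsetP[[a b] /setXP[ha hb] ->] /=.
  by apply: supportedD; [apply: (subsetP sT); apply: (subsetP sA) | apply: (subsetP sD)].
- exact: subset_trans sB sT.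
move=> v /supportedP hv; set w : G := \row_j (if j \in take t N then v 0 j else 0).
have wT : w \in supported (take t N) by apply/supportedP => j jn; rewrite mxE (negbTE jn).
have vwD : v - w \in supported (drop t N).
  apply/supportedP => j jn; rewrite !mxE; case: ifP => jt; first by rewrite subrr.
  by rewrite hv ?subr0 // -(cat_take_drop t N) mem_cat jt.
have [a ha [b hb e]] := cov _ wT.
exists (a + (v - w)); first by apply/imsetP; exists (a, v - w) => //; apply/setXP.
by exists b => //; rewrite addrAC -e addrC subrK.
Qed.

Lemma card_giant s (N : seq 'I_n) : uniq N -> (0 < s)%N ->
  (s * #|giant s N| <= 3 * p ^ size N + 3 * s)%N.
Proof.
move=> uN s0; set t := baby_len s.
have [_ _ _ _ hA] := coverP pp (take_uniq t uN) s0.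
have cA : (#|giant s N| <= #|(pick_cover (take t N) s).1| * #|supported (drop t N)|)%N.
  by rewrite -cardsX; apply: leq_imset_card.
rewrite card_supported ?take_uniq // in hA; rewrite card_supported ?drop_uniq // in cA.
rewrite size_take size_drop in hA cA.
set a := #|(pick_cover (take t N) s).1| in hA cA.
have sT : (s <= p ^ t)%N by apply: up_logP; apply: prime_gt1.
case: ltnP => [tN|Nt] in hA cA.
  have -> : (p ^ size N = p ^ t * p ^ (size N - t))%N by rewrite -expnD subnKC // ltnW.
  rewrite (maxn_idPl sT) in hA.
  apply: leq_trans (leq_mul (leqnn s) cA) _; rewrite mulnA.
  by apply: leq_trans (leq_addr _ _); rewrite mulnA leq_mul.
move: cA; rewrite (eqP (_ : size N - t == 0)%N) ?subn_eq0 // expn0 muln1 => cA.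
apply: leq_trans (leq_mul (leqnn s) cA) _; apply: leq_trans hA _.
by rewrite -mulnDr leq_mul2l geq_max leq_addr leq_addl orbT.
Qed.

Definition probe_pts (d : 'I_n) (A B : {set G}) : seq G :=
  enum [set basisv d + a | a in A] ++ enum [set - b | b in B].

Definition find_collision (rel : G -> G -> bool) d (A B : {set G}) :=
  [pick ab : G * G | [&& ab.1 \in A, ab.2 \in B & rel (basisv d + ab.1) (- ab.2)]].

Fixpoint sweep (stop : bool) (s : nat) (ds N : seq 'I_n) (Ps : seq G) (spent : nat)
   : prog G (option (seq G)) :=
  match ds with
  | [::] => Ret (Some Ps)
  | d :: ds' =>
    if (10 * s < spent + #|giant s N|)%N then Ret None else
    Look (probe_pts d (giant s N) (baby s N)) (fun rel =>
      match find_collision rel d (giant s N) (baby s N) with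
      | Some ab =>
          if stop then Ret (Some [:: basisv d + ab.1 + ab.2])
          else sweep stop s ds' N ((basisv d + ab.1 + ab.2) :: Ps) (spent + #|giant s N|)
      | None => sweep stop s ds' (rcons N d) Ps (spent + #|giant s N|)
      end)
  end.

Variable H : {set G}.

Definition collision s d (N : seq 'I_n) :=
  find_collision (coset_rel H (probe_pts d (giant s N) (baby s N))) d (giant s N) (baby s N).

Fixpoint sweep_cost (stop : bool) (s : nat) (ds N : seq 'I_n) (Ps : seq G) : nat :=
  match ds with
  | [::] => 0%N
  | d :: ds' => (#|giant s N| +
      match collision s d N with
      | Some ab => if stop then 0%N else sweep_cost stop s ds' N ((basisv d + ab.1 + ab.2)%R :: Ps)
      | None => sweep_cost stop s ds' (rcons N d) Ps
      end)%N
  end.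

Lemma sweep_within_budget stop s ds N Ps spent :
  (spent + sweep_cost stop s ds N Ps <= 10 * s)%N -> eval H (sweep stop s ds N Ps spent) <> None.
Proof.
elim: ds stop N Ps spent => [|d ds IH] stop N Ps spent //=.
rewrite addnA => hle; rewrite ltnNge (leq_trans (leq_addr _ _) hle) /=.
rewrite -/(collision s d N); case: (collision s d N) hle => [ab|] hle.
  by case: stop hle => // hle; apply: IH.
exact: IH.
Qed.

Lemma collisionP s d N :
  match collision s d N with
  | Some ab => [/\ ab.1 \in giant s N, ab.2 \in baby s N & basisv d + ab.1 + ab.2 \in H]
  | None => forall a b, a \in giant s N -> b \in baby s N -> basisv d + a + b \notin H
  end.
Proof.
rewrite /collision /find_collision; case: pickP => [[a b]|] /=.
  case/and3P => ha hb; rewrite /coset_rel /probe_pts !mem_cat !mem_enum opprK.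
  by case/and3P.
move=> none a b ha hb; move: (none (a, b)).
rewrite /= ha hb /= /coset_rel /probe_pts !mem_cat !mem_enum opprK.
by rewrite (imset_f _ ha) (imset_f _ hb) !orbT /= => ->.
Qed.

Hypothesis sgH : is_subgroup H.

(* [ds]: coordinates still to be processed; [N]: the non-pivot coordinates met so
   far; [Ps]: the vectors of [H] found so far, with pivots outside [N] and [ds]. *)
Record echelon (ds N : seq 'I_n) (Ps : seq G) : Prop := {
  ech_uniq_ds : uniq ds;
  ech_uniq_N : uniq N;
  ech_disjoint : forall j, j \in N -> j \notin ds;
  ech_basis : forall u, u \in Ps -> u \in H /\ u \in vanishing ds;
  ech_decomp : forall w, w \in vanishing ds ->
    exists2 v, v \in supported N & exists2 x, x \in span_set Ps & w = v + x;
  ech_span : forall h, h \in H -> h \in vanishing ds -> h \in span_set Ps;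
  ech_free : forall v, v \in H -> v \in supported N -> v = 0 }.

Lemma echelon_span_subset ds N Ps : echelon ds N Ps -> span_set Ps \subset H.
Proof. by move=> E; apply: span_set_subgroup => // u /(ech_basis E) []. Qed.

Lemma echelon_init : echelon (enum 'I_n) [::] [::].
Proof.
have vanish_all w : w \in vanishing (enum 'I_n) -> w = 0.
  by move=> /vanishingP h; apply/rowP => j; rewrite mxE h // mem_enum.
split => //.
- exact: enum_uniq.
- by move=> w /vanish_all ->; exists 0; rewrite ?supported0 //; exists 0; rewrite ?inE ?addr0.
- by move=> h _ /vanish_all ->; rewrite inE.
- by move=> v _ /supportedP h; apply/rowP => j; rewrite mxE h.
Qed.

Variable s : nat.
Hypothesis s0 : (0 < s)%N.

Lemma echelon_pivot (d : 'I_n) ds N Ps a b : echelon (d :: ds) N Ps ->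
  a \in giant s N -> b \in baby s N -> basisv d + a + b \in H ->
  echelon ds N ((basisv d + a + b) :: Ps) /\ basisv d + a + b <> 0.
Proof.
move=> E ha hb hu; set u := basisv d + a + b in hu *.
have [sA sB _] := giant_baby_cover (ech_uniq_N E) s0.
have /supportedP a0 := subsetP sA _ ha; have /supportedP b0 := subsetP sB _ hb.
have dN : d \notin N by apply/negP => /(ech_disjoint E); rewrite mem_head.
have ud : u 0 d = 1 by rewrite /u !mxE eqxx a0 // b0 // !addr0.
have /andP[dds uds] := ech_uniq_ds E.
have uW : u \in vanishing ds.
  apply/vanishingP => j jd; rewrite /u !mxE.
  have jN : j \notin N by apply/negP => /(ech_disjoint E); rewrite in_cons jd orbT.
  by rewrite a0 // b0 // !addr0; case: eqP => // e; rewrite -e jd in dds.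
have vanish_tail w : w \in vanishing (d :: ds) -> w \in vanishing ds.
  by rewrite vanishing_cons => /andP[].
clearbody u.
have clear_d w : w \in vanishing ds -> w - w 0 d *: u \in vanishing (d :: ds).
  move=> hw; rewrite vanishing_cons supportedB ?supportedZ //=.
  by rewrite !mxE ud mulr1 subrr.
split; last by move=> e; move: ud; rewrite e mxE => /eqP; rewrite eq_sym oner_eq0.
split => //.
- exact: (ech_uniq_N E).
- by move=> j /(ech_disjoint E); rewrite in_cons negb_or => /andP[].
- move=> w; rewrite in_cons => /orP[/eqP -> //|wP].
  by have [h1 h2] := ech_basis E wP; split => //; apply: vanish_tail.
- move=> w hw; have [v hv [x hx e]] := ech_decomp E (clear_d w hw).
  exists v => //; exists (w 0 d *: u + x); first exact: span_set_cons.
  by rewrite addrCA -e addrC subrK.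
- move=> h hh hw; rewrite -[h](subrK (h 0 d *: u)) addrC; apply: span_set_cons.
  by apply: (ech_span E) (clear_d h hw); rewrite subgroupB ?subgroupZ.
- exact: (ech_free E).
Qed.

Lemma echelon_decomp_rcons (d : 'I_n) ds N Ps w : echelon (d :: ds) N Ps ->
  w \in vanishing ds ->
  exists2 v, v \in supported (rcons N d) & exists2 x, x \in span_set Ps & w = v + x.
Proof.
move=> E hw; have /andP[dds _] := ech_uniq_ds E.
have hw' : w - w 0 d *: basisv d \in vanishing (d :: ds).
  rewrite vanishing_cons; apply/andP; split; last by rewrite !mxE eqxx mulr1 subrr.
  rewrite supportedB ?supportedZ //.
  by apply/vanishingP => j jd; rewrite mxE; case: eqP => // e; rewrite -e jd in dds.
have [v hv [x hx e]] := ech_decomp E hw'.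
exists (v + w 0 d *: basisv d); last by exists x => //; rewrite addrAC -e subrK.
rewrite supportedD ?supportedZ ?basisv_supported ?mem_rcons ?mem_head //.
exact: subsetP (supported_rcons_subset p d N) _ hv.
Qed.

(* If [v] in [H] is supported on [N] and [d] with [v d != 0], then normalising
   [v d] to [1] and splitting the rest as a giant plus a baby step gives a collision. *)
Lemma echelon_free_rcons (d : 'I_n) ds N Ps : echelon (d :: ds) N Ps ->
  (forall a b, a \in giant s N -> b \in baby s N -> basisv d + a + b \notin H) ->
  forall v, v \in H -> v \in supported (rcons N d) -> v = 0.
Proof.
move=> E none v hv /supportedP vN.
have [_ _ cov] := giant_baby_cover (ech_uniq_N E) s0.
have vN' j : j != d -> j \notin N -> v 0 j = 0.
  by move=> jd jN; apply: vN; rewrite mem_rcons in_cons negb_or jd.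
have [vd0|vd] := eqVneq (v 0 d) 0.
  apply: (ech_free E) hv _; apply/supportedP => j jN.
  by case: (eqVneq j d) => [->//|jd]; apply: vN'.
set u := (v 0 d)^-1 *: v.
have hu' : u - basisv d \in supported N.
  apply/supportedP => j jN; rewrite !mxE; case: (eqVneq j d) => [->|jd].
    by rewrite mulVf // subrr.
  by rewrite (vN' j) // mulr0 mulr0n subrr.
have [a ha [b hb e]] := cov _ hu'.
by move: (none a b ha hb); rewrite -addrA -e addrC subrK subgroupZ.
Qed.

Lemma echelon_nonpivot (d : 'I_n) ds N Ps : echelon (d :: ds) N Ps ->
  (forall a b, a \in giant s N -> b \in baby s N -> basisv d + a + b \notin H) ->
  echelon ds (rcons N d) Ps.
Proof.
move=> E none; have /andP[dds uds] := ech_uniq_ds E.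
have dN : d \notin N by apply/negP => /(ech_disjoint E); rewrite mem_head.
have free := echelon_free_rcons E none.
split => //.
- by rewrite rcons_uniq dN (ech_uniq_N E).
- move=> j; rewrite mem_rcons in_cons => /orP[/eqP ->//|/(ech_disjoint E)].
  by rewrite in_cons negb_or => /andP[].
- move=> u /(ech_basis E) [h1 h2]; split => //.
  by move: h2; rewrite vanishing_cons => /andP[].
- by move=> w; apply: echelon_decomp_rcons.
- move=> h hh hw; have [v hv [x hx e]] := echelon_decomp_rcons E hw.
  have vH : v \in H.
    rewrite (_ : v = h - x); last by rewrite e addrK.
    by rewrite subgroupB // (subsetP (echelon_span_subset E)).
  by rewrite e (free v vH hv) add0r.
Qed.

Lemma card_Zpn : #|[set: G]| = (p ^ n)%N.
Proof. by rewrite cardsT card_mx card_Fp // mul1n. Qed.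

Lemma echelon_add_inj ds N Ps (Y : {set G}) : echelon ds N Ps -> Y \subset H ->
  forall x x' y y', x \in supported N -> x' \in supported N -> y \in Y -> y' \in Y ->
  x + y = x' + y' -> x = x'.
Proof.
move=> E sYH x x' y y' hx hx' hy hy' /add_eq_sub_eq e.
apply/eqP; rewrite -subr_eq0; apply/eqP; apply: (ech_free E); last exact: supportedB.
by rewrite e subgroupB // (subsetP sYH).
Qed.

Lemma echelon_card_le ds N Ps : echelon ds N Ps -> (p ^ size N * #|H| <= p ^ n)%N.
Proof.
move=> E; rewrite -(card_supported pp (ech_uniq_N E)) -card_Zpn.
rewrite -card_sumset; last exact: echelon_add_inj E (subxx H).
by apply: subset_leq_card; apply/subsetP => x; rewrite inE.
Qed.

Lemma echelon_card_vanishing ds N Ps : echelon ds N Ps ->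
  #|vanishing ds| = (p ^ size N * #|span_set Ps|)%N.
Proof.
move=> E; rewrite -(card_supported pp (ech_uniq_N E)).
rewrite -card_sumset; last exact: echelon_add_inj E (echelon_span_subset E).
have sNW := supported_vanishing p (ech_disjoint E).
have sPW : span_set Ps \subset vanishing ds.
  by apply: span_set_supported => u /(ech_basis E) [].
apply: eq_card => w; apply/idP/imsetP => [/(ech_decomp E)[v hv [x hx ->]]|].
  by exists (v, x) => //; apply/setXP.
case=> [[v x]] /setXP[hv hx] ->.
by apply: supportedD; [exact: subsetP sNW _ hv | exact: subsetP sPW _ hx].
Qed.

Lemma echelon_card_ge ds N Ps : echelon ds N Ps -> (p ^ (n - size ds) <= p ^ size N * #|H|)%N.
Proof.
move=> E; rewrite -(card_vanishing pp (ech_uniq_ds E)) (echelon_card_vanishing E).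
by rewrite leq_mul2l subset_leq_card ?orbT // (echelon_span_subset E).
Qed.

Lemma echelon_final N Ps : echelon [::] N Ps -> span_set Ps = H /\ (p ^ n = p ^ size N * #|H|)%N.
Proof.
move=> E; split.
  apply/eqP; rewrite eqEsubset (echelon_span_subset E); apply/subsetP => h hh.
  by apply: (ech_span E) hh _; apply/vanishingP.
by apply/eqP; rewrite eqn_leq (echelon_card_le E) -[X in (p ^ X)%N]subn0 (echelon_card_ge E).
Qed.

Definition sweep_spec (stop : bool) (Ps : seq G) : Prop :=
  if stop then nilp Ps = (H == [set 0]) else span_set Ps = H.

Lemma sweep_correct (stop : bool) (ds N : seq 'I_n) Ps spent Ps' :
  echelon ds N Ps -> (stop -> Ps = [::]) ->
  eval H (sweep stop s ds N Ps spent) = Some Ps' -> sweep_spec stop Ps'.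
Proof.
elim: ds stop N Ps spent => [|d ds IH] stop N Ps spent E Ps_nil /=.
  case=> <-; have [span_H _] := echelon_final E; rewrite /sweep_spec.
  case: stop Ps_nil => [/(_ isT) Ps0|_ //]; rewrite Ps0 /= in span_H *.
  by rewrite -span_H; apply/esym/eqP.
case: ifP => // _ /=; rewrite -/(collision s d N).
have := collisionP s d N; case: (collision s d N) => [[a b] [ha hb hu]|none] /=.
  have [E' nz] := echelon_pivot E ha hb hu.
  case: stop Ps_nil IH => Ps_nil IH; last exact: IH E' _.
  case=> <-; rewrite /sweep_spec /=; apply/esym/negP => /eqP H0.
  by move: hu; rewrite H0 inE => /eqP.
exact: IH (echelon_nonpivot E none) Ps_nil.
Qed.

Section GivenOrder.
Variable k : nat.
Hypothesis card_H : #|H| = (p ^ k)%N.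
Local Notation m := (n - k)%N.

Lemma echelon_size_le ds N Ps : echelon ds N Ps -> (size N <= m)%N.
Proof.
move=> E; have := echelon_card_le E.
by rewrite card_H -expnD leq_exp2l ?prime_gt1 //; lia.
Qed.

Lemma echelon_size_ge ds N Ps : echelon ds N Ps -> (m <= size N + size ds)%N.
Proof.
move=> E; have := echelon_card_ge E.
by rewrite card_H -expnD leq_exp2l ?prime_gt1 //; lia.
Qed.

(* A coordinate costs [#|giant s N| <= 3 p ^ size N / s + 3] ([card_giant]).  Each
   non-pivot makes [size N <= m] grow, so their costs form a geometric series;
   each pivot costs at most [3 p ^ m / s + 3]. *)
Lemma sweep_cost_decide ds N Ps : echelon ds N Ps ->
  (s * sweep_cost true s ds N Ps <= 3 * s * (m - size N + 1) + 3 * (2 * p ^ m - p ^ size N))%N.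
Proof.
elim: ds N Ps => [|d ds IH] N Ps E /=; first by rewrite muln0.
have hN := echelon_size_le E; have hA := card_giant (ech_uniq_N E) s0.
have hP : (p ^ size N <= p ^ m)%N by rewrite leq_exp2l ?prime_gt1.
have := collisionP s d N; case: (collision s d N) => [[a b] _|none] /=.
  rewrite addn0; move: hA hP; set P := (p ^ size N)%N; set Q := (p ^ m)%N.
  by set A := #|giant s N|; set t := (m - size N)%N; nia.
have E' := echelon_nonpivot E none; have := IH _ _ E'.
have := echelon_size_le E'; rewrite size_rcons => hN' /=.
have hP1 : (p ^ (size N).+1 <= p ^ m)%N by rewrite leq_exp2l ?prime_gt1.
have h2 := leq_pexpS (size N) (prime_gt1 pp).
have -> : (m - (size N).+1 + 1 = m - size N)%N by lia.
move: hA hP hP1 h2 hN'; set P := (p ^ size N)%N; set Q := (p ^ m)%N.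
set P1 := (p ^ (size N).+1)%N; set A := #|giant s N|.
by set T := sweep_cost true s ds (rcons N d) Ps; set t := (m - size N)%N; nia.
Qed.

Lemma sweep_cost_identify ds N Ps : echelon ds N Ps ->
  (s * sweep_cost false s ds N Ps <= 3 * s * size ds +
     3 * ((size N + size ds - m) * p ^ m + p ^ m - p ^ size N))%N.
Proof.
elim: ds N Ps => [|d ds IH] N Ps E /=; first by rewrite muln0.
have hN := echelon_size_le E; have hA := card_giant (ech_uniq_N E) s0.
have hP : (p ^ size N <= p ^ m)%N by rewrite leq_exp2l ?prime_gt1.
have := collisionP s d N; case: (collision s d N) => [[a b] [ha hb hu]|none] /=.
  have [E' _] := echelon_pivot E ha hb hu.
  have := IH _ _ E'; have hd := echelon_size_ge E'.
  have -> : (size N + (size ds).+1 - m = (size N + size ds - m) + 1)%N by lia.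
  move: hA hP hd; set P := (p ^ size N)%N; set Q := (p ^ m)%N.
  set A := #|giant s N|; set T := sweep_cost false s ds N _.
  by set X := (size N + size ds - m)%N; nia.
have E' := echelon_nonpivot E none; have := IH _ _ E'.
have := echelon_size_le E'; rewrite size_rcons => hN'.
have hP1 : (p ^ (size N).+1 <= p ^ m)%N by rewrite leq_exp2l ?prime_gt1.
have h2 := leq_pexpS (size N) (prime_gt1 pp).
move: hA hP hP1 h2 hN'; set P := (p ^ size N)%N; set Q := (p ^ m)%N.
set P1 := (p ^ (size N).+1)%N; set A := #|giant s N|.
set T := sweep_cost false s ds (rcons N d) Ps.
have -> : ((size N).+1 + size ds = size N + (size ds).+1)%N by lia.
by set X := (size N + (size ds).+1 - m)%N; nia.
Qed.

End GivenOrder.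

Definition baby_pool (Nf : seq 'I_n) : {set G} :=
  \bigcup_(i < (baby_len s).+1) [set - b | b in (pick_cover (take i Nf) s).2].

Lemma take_cat_prefix (N r : seq 'I_n) t : take t N = take (minn t (size N)) (N ++ r).
Proof.
case: (ltnP t (size N)) => h; first by rewrite take_cat h.
by rewrite take_cat ltnn subnn take0 cats0 take_oversize.
Qed.

Lemma baby_sub_pool (N r : seq 'I_n) : [set - b | b in baby s N] \subset baby_pool (N ++ r).
Proof.
rewrite /baby (take_cat_prefix N r); set i := minn _ _.
have hi : (i < (baby_len s).+1)%N by rewrite ltnS geq_minl.
exact: (bigcup_sup (Ordinal hi)).
Qed.

Lemma card_baby_pool Nf : uniq Nf -> (#|baby_pool Nf| <= 4 * s)%N.
Proof.
move=> uN; set B := fun i : nat => [set - b | b in (pick_cover (take i Nf) s).2].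
apply: leq_trans (card_bigcup_leq_sum _ B) _; set t := baby_len s.
have card_Bi i : (#|B i| <= minn (p ^ i) (2 * s))%N.
  have [_ sB _ hB _] := coverP pp (take_uniq i uN) s0.
  apply: leq_trans (leq_imset_card _ _) _; rewrite leq_min hB andbT.
  apply: leq_trans (subset_leq_card sB) _.
  by rewrite card_supported ?take_uniq // leq_exp2l ?prime_gt1 // size_take geq_minl.
rewrite big_ord_recr /=; apply: leq_trans (leq_add (leqnn _) (card_Bi t)) _.
suff : (\sum_(i < t) #|B i| <= 2 * s)%N.
  by have := geq_minr (p ^ t) (2 * s); set S := \sum_(i < t) _; set M := minn _ _; lia.
case: (posnP t) => [->|t0]; first by rewrite big_ord0.
apply: (@leq_trans (\sum_(i < t) p ^ i)).
  by apply: leq_sum => i _; apply: leq_trans (card_Bi i) (geq_minl _ _).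
have s1 : (1 < s)%N by move: t0; rewrite up_log_gt0 => /andP[].
have := up_log_gtn (prime_gt1 pp) s1; rewrite -/(baby_len s) -/t => hlt.
rewrite -(prednK t0); apply: leq_trans (sum_pexp_le _ (prime_gt1 pp)) _.
by rewrite leq_mul2l ltnW // prednK.
Qed.

(* [X] collects the giant-step probes, within the remaining budget. *)
Definition pool_bound spent (N : seq 'I_n) (S : seq G) : Prop :=
  exists2 X : {set G}, (spent + #|X| <= 10 * s)%N &
  exists2 r, uniq (N ++ r) & [set x in S] \subset X :|: baby_pool (N ++ r).

Lemma pool_bound_nil spent (N : seq 'I_n) : uniq N -> (spent <= 10 * s)%N ->
  pool_bound spent N [::].
Proof.
move=> uN le_spent; exists set0; rewrite ?cards0 ?addn0 //.
by exists [::]; rewrite ?cats0 //; apply/subsetP => x; rewrite inE.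
Qed.

Lemma pool_bound_look spent (N : seq 'I_n) d S :
  pool_bound (spent + #|giant s N|) N S ->
  pool_bound spent N (probe_pts d (giant s N) (baby s N) ++ S).
Proof.
case=> X le_X [r uNr sub]; exists ([set basisv d + a | a in giant s N] :|: X).
  apply: leq_trans (leq_add (leqnn _) (leq_card_setU _ _).1) _.
  by rewrite addnA (leq_trans _ le_X) // leq_add2r leq_add2l leq_imset_card.
exists r => //; apply/subsetP => x; rewrite inE mem_cat /probe_pts mem_cat !mem_enum !inE.
case/orP => [/orP[->//|hb]|hS]; first by rewrite (subsetP (baby_sub_pool N r)) ?orbT.
by move: (subsetP sub x); rewrite !inE hS => /(_ isT) /orP[] ->; rewrite ?orbT.
Qed.

Lemma pool_bound_rcons spent (N : seq 'I_n) d S :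
  pool_bound spent (rcons N d) S -> pool_bound spent N S.
Proof. by case=> X le_X [r]; rewrite cat_rcons => uNr sub; exists X => //; exists (d :: r). Qed.

Lemma sweep_pool_bound stop (ds N : seq 'I_n) Ps spent :
  uniq (N ++ ds) -> (spent <= 10 * s)%N ->
  pool_bound spent N (probes H (sweep stop s ds N Ps spent)).
Proof.
elim: ds N Ps spent => [|d ds IH] N Ps spent uNds le_spent /=.
  by apply: pool_bound_nil; rewrite // cats0 in uNds.
have uN : uniq N by move: uNds; rewrite cat_uniq => /and3P[].
case: ifP => [_|/negbT]; first exact: pool_bound_nil.
rewrite -leqNgt => le_spent' /=; apply: pool_bound_look; rewrite -/(collision s d N).
have uNds' : uniq (N ++ ds).
  by move: uNds; rewrite !cat_uniq /= => /and3P[-> /norP[_ ->] /andP[_ ->]].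
case: (collision s d N) => [ab|].
  by case: stop IH => IH /=; [apply: pool_bound_nil | apply: IH].
by apply: pool_bound_rcons; apply: IH; rewrite ?cat_rcons.
Qed.

End Sweep.

Section Rounds.
Variables p n : nat.
Hypothesis pp : prime p.
Local Notation G := (Zpn p n).

Fixpoint rounds (stop : bool) (j fuel : nat) : prog G (option (seq G)) :=
  match fuel with
  | 0 => Ret None
  | f.+1 => bind (sweep stop (2 ^ j) (enum 'I_n) [::] [::] 0)
                 (fun o => if o is Some _ then Ret o else rounds stop j.+1 f)
  end.

Variable H : {set G}.
Hypothesis sgH : is_subgroup H.

Lemma echelon_complete ds N Ps : echelon H ds N Ps -> exists N' Ps', echelon H [::] N' Ps'.
Proof.
elim: ds N Ps => [|d ds IH] N Ps E; first by exists N, Ps.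
have := collisionP H 1 d N; case: (collision H 1 d N) => [[a b] [ha hb hu]|none].
  by have [E' _] := echelon_pivot pp sgH (isT : 0 < 1)%N E ha hb hu; apply: IH E'.
exact: IH (echelon_nonpivot pp sgH (isT : 0 < 1)%N E none).
Qed.

Lemma card_subgroup_pexp : #|H| = (p ^ logn p #|H|)%N.
Proof.
have [N [Ps /(echelon_final pp sgH) [_ card_G]]] := echelon_complete (echelon_init H).
have H0 : (0 < #|H|)%N by apply/card_gt0P; exists 0%R; apply: subgroup0.
have : (#|H| %| p ^ n)%N by rewrite card_G dvdn_mull.
by case/(dvdn_pfactor _ _ pp) => e _ ->; rewrite pfactorK.
Qed.

Variable k : nat.
Hypothesis card_H : #|H| = (p ^ k)%N.
Local Notation m := (n - k)%N.

Lemma k_le_n : (k <= n)%N.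
Proof.
rewrite -(leq_exp2l _ _ (prime_gt1 pp)) -card_H -(card_Zpn n pp).
by apply: subset_leq_card; apply/subsetP => x; rewrite inE.
Qed.

Definition size_ok (stop : bool) (s : nat) : bool :=
  if stop then (m.+1 <= s)%N && (2 * p ^ m <= s * s)%N
  else (n <= s)%N && (k.+1 * p ^ m <= s * s)%N.

Lemma round_correct stop s Ps : (0 < s)%N ->
  eval H (sweep stop s (enum 'I_n) [::] [::] 0) = Some Ps -> sweep_spec H stop Ps.
Proof. by move=> s0; apply: (sweep_correct pp sgH s0 (echelon_init H)). Qed.

Lemma round_cost stop s : (0 < s)%N ->
  (#|[set x in probes H (sweep stop s (enum 'I_n) [::] [::] 0)]| <= 14 * s)%N.
Proof.
move=> s0; have u0 : uniq ([::] ++ enum 'I_n) by rewrite enum_uniq.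
have [X le_X [r ur sub]] := sweep_pool_bound H (s := s) stop [::] u0 (leq0n _).
apply: leq_trans (subset_leq_card sub) _; apply: leq_trans (leq_card_setU _ _).1 _.
by rewrite add0n in le_X; rewrite (_ : 14 = 10 + 4)%N // mulnDl leq_add // card_baby_pool.
Qed.

Lemma round_complete stop s : (0 < s)%N -> size_ok stop s ->
  eval H (sweep stop s (enum 'I_n) [::] [::] 0) <> None.
Proof.
move=> s0 ok; apply: sweep_within_budget; rewrite add0n -(leq_pmul2l s0).
have kn := k_le_n.
case: stop ok => /andP[h1 h2].
  have := sweep_cost_decide pp sgH s0 card_H (echelon_init H); rewrite /= expn0.
  by move: h1 h2; set Q := (p ^ m)%N; set T := sweep_cost _ _ _ _ _ _; nia.
have := sweep_cost_identify pp sgH s0 card_H (echelon_init H).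
rewrite /= expn0 size_enum_ord add0n (_ : n - m = k)%N; last by lia.
by move: h1 h2; set Q := (p ^ m)%N; set T := sweep_cost _ _ _ _ _ _; nia.
Qed.

(* The rounds succeed at the latest with [s = 2 ^ j0], having spent at most the
   geometric sum of the budgets [14 * 2 ^ i], [j <= i <= j0]. *)
Lemma rounds_spec stop fuel j j0 : size_ok stop (2 ^ j0) -> (j <= j0 < j + fuel)%N ->
  (exists2 Ps, eval H (rounds stop j fuel) = Some Ps & sweep_spec H stop Ps) /\
  (#|[set x in probes H (rounds stop j fuel)]| + 14 * 2 ^ j <= 14 * 2 ^ j0.+1)%N.
Proof.
move=> ok; elim: fuel j => [|f IH] j /andP[hj hj0]; first by rewrite addn0 in hj0; lia.
rewrite /= eval_bind probes_bind.
have s0 : (0 < 2 ^ j)%N by rewrite expn_gt0.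
have cost := round_cost stop s0.
case e: (eval H (sweep stop (2 ^ j) (enum 'I_n) [::] [::] 0)) => [Ps|] /=.
  split; first by exists Ps => //; apply: round_correct e.
  rewrite cats0; apply: leq_trans (leq_add cost (leqnn _)) _.
  by rewrite -mulnDr addnn -mul2n -expnS leq_mul2l leq_exp2l.
have jj0 : j != j0 by apply/eqP => ej; subst j; apply: (round_complete s0 ok); rewrite e.
have hj' : (j.+1 <= j0 < j.+1 + f)%N by rewrite ltn_neqAle jj0 hj addSnnS.
have [IH1 IH2] := IH j.+1 hj'.
split => //; apply: leq_trans _ IH2.
apply: leq_trans (leq_add (card_set_cat _ _) (leqnn _)) _.
move: cost; rewrite expnS; set X := #|[set x in probes H _]|.
by set Y := #|[set x in probes H (rounds _ _ _)]|; set Z := (2 ^ j)%N; lia.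
Qed.

End Rounds.

Lemma sq_le_pexp p m : (1 < p)%N -> (m.+1 * m.+1 <= 4 * p ^ m)%N.
Proof.
move=> p1; apply: (@leq_trans (4 * 2 ^ m)); last by case: m => // m; rewrite leq_mul2l leq_exp2r.
elim: m => [|m IH] //; case: m IH => [|[|m]] IH //.
by rewrite expnS; move: IH; set Z := (2 ^ m.+2)%N; nia.
Qed.

Lemma min_pow2_sq_le A B j0 :
  (forall j, (A <= 2 ^ j)%N && (B <= 2 ^ j * 2 ^ j)%N -> (j0 <= j)%N) ->
  (2 ^ j0 * 2 ^ j0 <= 4 * A * A + 4 * B + 1)%N.
Proof.
case: j0 => [|j] j0_min; first by rewrite expn0; lia.
have : ~~ ((A <= 2 ^ j)%N && (B <= 2 ^ j * 2 ^ j)%N).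
  by apply/negP => ok; have := j0_min _ ok; rewrite ltnn.
by rewrite expnS; set Z := (2 ^ j)%N; case/nandP; rewrite -ltnNge => h; nia.
Qed.

Section Algorithms.
Variables p n : nat.
Hypothesis pp : prime p.
Hypothesis n1 : (1 <= n)%N.
Local Notation G := (Zpn p n).
Local Notation fuel := (n * p + n + 2)%N.

Definition run_rounds B stop (post : option (seq G) -> B) : qtree G B :=
  compile (bind (rounds p n stop 0 fuel) (fun o => Ret (post o))) [::] [::].

Definition trivial_test : qtree G bool :=
  run_rounds true (fun o => if o is Some Ps then nilp Ps else false).

Definition subgroup_finder : qtree G {set G} :=
  run_rounds false (fun o => if o is Some Ps then span_set Ps else set0).

Variable H : {set G}.
Hypothesis sgH : is_subgroup H.
Local Notation k := (logn p #|H|).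
Local Notation m := (n - k)%N.

Lemma size_ok_fuel stop : size_ok p n k stop (2 ^ (n * p + n + 1)).
Proof.
have kn := k_le_n pp (card_subgroup_pexp pp sgH).
have big : (n.+1 * p ^ n <= 2 ^ (n * p + n + 1))%N.
  rewrite -addnA expnD mulnC; apply: leq_mul; last by rewrite addn1 ltnW // ltn_expl.
  by rewrite mulnC expnM leq_exp2r // ltnW // ltn_expl.
have Pm : (p ^ m <= p ^ n)%N by rewrite leq_exp2l ?prime_gt1 //; lia.
have Pn : (0 < p ^ n)%N by rewrite expn_gt0 prime_gt0.
move: big Pm Pn; set s := (2 ^ _)%N; set Q := (p ^ m)%N; set P := (p ^ n)%N.
by rewrite /size_ok; case: stop; nia.
Qed.

Lemma run_rounds_spec B stop (post : option (seq G) -> B) (X : eqType) (f : G -> X) :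
  hides f H -> exists j0 Ps,
  [/\ output (run_rounds stop post) f = post (Some Ps), sweep_spec H stop Ps,
      (nqueries (run_rounds stop post) f <= 28 * 2 ^ j0)%N &
      forall j, size_ok p n k stop (2 ^ j) -> (j0 <= j)%N].
Proof.
move=> hf; have ex_ok : exists j, size_ok p n k stop (2 ^ j).
  by exists (n * p + n + 1)%N; exact: size_ok_fuel.
exists (ex_minn ex_ok); case: ex_minnP => j0 ok j0_min.
have hj : (0 <= j0 < 0 + fuel)%N by rewrite add0n; have := j0_min _ (size_ok_fuel stop); lia.
have [[Ps e_out spec] cost] := rounds_spec pp sgH (card_subgroup_pexp pp sgH) ok hj.
have [o1 o2] := compile_correct (hides_eq sgH hf)
  (bind (rounds p n stop 0 fuel) (fun o => Ret (post o))).
rewrite eval_bind e_out in o1; rewrite probes_bind e_out /= cats0 in o2.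
exists Ps; split => //; apply: leq_trans o2 _; rewrite expn0 muln1 in cost.
by apply: leq_trans (leq_trans (leq_addr 14 _) cost) _; rewrite expnS; lia.
Qed.

Lemma trivial_test_spec (X : eqType) (f : G -> X) : hides f H ->
  output trivial_test f = (H == [set 0%R]) /\
  (nqueries trivial_test f * nqueries trivial_test f <= 280 * 280 * p ^ m)%N.
Proof.
move=> hf; have [j0 [Ps [-> spec cost j0_min]]] :=
  run_rounds_spec true (fun o => if o is Some Ps then nilp Ps else false) hf.
split; first exact: spec.
have sq := min_pow2_sq_le j0_min; have := sq_le_pexp m (prime_gt1 pp).
have P1 : (0 < p ^ m)%N by rewrite expn_gt0 prime_gt0.
move: cost sq P1; set q := nqueries _ f; set x := (2 ^ j0)%N; set P := (p ^ m)%N.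
by nia.
Qed.

Lemma subgroup_finder_spec (X : eqType) (f : G -> X) : hides f H ->
  output subgroup_finder f = H /\
  (nqueries subgroup_finder f * nqueries subgroup_finder f
     <= 280 * 280 * maxn (k * k) (maxn 1 k * p ^ m))%N.
Proof.
move=> hf; have [j0 [Ps [-> spec cost j0_min]]] :=
  run_rounds_spec false (fun o => if o is Some Ps then span_set Ps else set0) hf.
split; first exact: spec.
have kn := k_le_n pp (card_subgroup_pexp pp sgH).
have sq := min_pow2_sq_le j0_min; have := sq_le_pexp m (prime_gt1 pp).
have P1 : (0 < p ^ m)%N by rewrite expn_gt0 prime_gt0.
have n_sq : (n * n <= 4 * (k * k) + 4 * (m * m))%N by nia.
move: cost sq P1 n_sq; set q := nqueries _ f; set x := (2 ^ j0)%N; set P := (p ^ m)%N.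
by nia.
Qed.

End Algorithms.

Lemma INR_le_mul_sqrt (q C X : nat) :
  (q * q <= C * C * X)%N -> Rle (INR q) (Rmult (INR C) (sqrt (INR X))).
Proof.
move=> le_sq.
have -> : INR q = sqrt (INR (q * q)) by rewrite mult_INR sqrt_square //; apply: pos_INR.
have -> : Rmult (INR C) (sqrt (INR X)) = sqrt (INR (C * C * X)).
  rewrite !mult_INR sqrt_mult_alt; last by apply: Rmult_le_pos; apply: pos_INR.
  by rewrite sqrt_square //; apply: pos_INR.
by apply: sqrt_le_1_alt; apply: le_INR; apply/leP.
Qed.

Lemma INR_le_mul_Rmax_sqrt (q C k Y : nat) : (q * q <= C * C * maxn (k * k) Y)%N ->
  Rle (INR q) (Rmult (INR C) (Rmax (INR k) (sqrt (INR Y)))).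
Proof.
have C0 := pos_INR C.
case: (leqP Y (k * k)) => [le_Yk|lt_kY] le_sq.
  have /leP/le_INR : (q <= C * k)%N by rewrite -leq_sqr !expnS !expn0 !muln1 mulnACA.
  rewrite mult_INR => le_q; apply: Rle_trans le_q _.
  by apply: Rmult_le_compat_l => //; apply: Rmax_l.
apply: Rle_trans (INR_le_mul_sqrt le_sq) _.
by apply: Rmult_le_compat_l => //; apply: Rmax_r.
Qed.

Theorem corollary1 :
  exists C : R, Rlt R0 C /\
  forall (p n : nat), prime p -> (1 <= n)%N ->
    (exists A : qtree (Zpn p n) bool,
       forall (X : finType) (f : Zpn p n -> X) (H : {set Zpn p n}),
         is_subgroup H -> hides f H ->
         output A f = (H == [set 0%R]) /\
         Rle (INR (nqueries A f))
             (Rmult C (sqrt (INR (p ^ (n - logn p #|H|)))))) /\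
    (exists A : qtree (Zpn p n) {set Zpn p n},
       forall (X : finType) (f : Zpn p n -> X) (H : {set Zpn p n}),
         is_subgroup H -> hides f H ->
         let k := logn p #|H| in
         output A f = H /\
         Rle (INR (nqueries A f))
             (Rmult C (Rmax (INR k) (sqrt (INR (maxn 1 k * p ^ (n - k))))))).
Proof.
exists (INR 280); split; first by apply: lt_0_INR; apply/ltP.
move=> p n pp n1; split.
  exists (trivial_test p n) => X f H sgH hf.
  have [out cost] := trivial_test_spec pp n1 sgH hf.
  by split; last exact: INR_le_mul_sqrt.
exists (subgroup_finder p n) => X f H sgH hf k.
have [out cost] := subgroup_finder_spec pp n1 sgH hf.
by split; last exact: INR_le_mul_Rmax_sqrt.
Qed.
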